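(* Let $S:\mathcal{V}\times\mathcal{Y}\to\mathbb{R}$ be a surrogate loss such that $S(\cdot,y)$ is continuous for every $y\in\mathcal{Y}$, and suppose there is a continuous injective map $t:\mathcal{M}\to\mathcal{V}$ such that for every $q\in\operatorname{Prob}(\mathcal{Y})$, $t(\mu(q))$ is the unique minimizer of $v\mapsto s(v,q)$ over $\mathcal{V}$. Then there exists a strictly convex function $h:\mathcal{M}\to\mathbb{R}$, differentiable on $\mathcal{M}$ (with gradients taken within the affine hull of $\mathcal{M}$), such that $$\delta s(v,q)=D_h\big(\mu(q),t^{-1}(v)\big)\qquad\text{for all } v\in t(\mathcal{M}),\ q\in\operatorname{Prob}(\mathcal{Y}).$$
   Context: Let $\mathcal{Y}$ be a finite nonempty set, $\mathcal{H}$ a finite-dimensional real Euclidean space with inner product $\langle\cdot,\cdot\rangle$, and $\phi:\mathcal{Y}\to\mathcal{H}$ a map. $\operatorname{Prob}(\mathcal{Y})$ denotes the set of probability distributions on $\mathcal{Y}$; for $q\in\operatorname{Prob}(\mathcal{Y})$ let $\mu(q)=\sum_{y}q(y)\phi(y)$. The marginal polytope is $\mathcal{M}=\operatorname{hull}(\phi(\mathcal{Y}))=\{\mu(q):q\in\operatorname{Prob}(\mathcal{Y})\}$. A surrogate loss is a function $S:\mathcal{V}\times\mathcal{Y}\to\mathbb{R}$ where $\mathcal{V}$ is a finite-dimensional real vector space; $s(v,q)=\mathbb{E}_{Y\sim q}S(v,Y)$ and $\delta s(v,q)=s(v,q)-\inf_{v'\in\mathcal{V}}s(v',q)$. For a convex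 differentiable $h$ on a convex set, the Bregman divergence is $D_h(u',u)=h(u')-h(u)-\langle u'-u,\nabla h(u)\rangle$. *)

From Stdlib Require Import Reals Lra.
Open Scope R_scope.

(* Vectors of R^n are represented as functions nat -> R whose coordinates
   with index >= n are 0 (predicate [in_space n]). *)
Definition vec := nat -> R.

Fixpoint rsum (n : nat) (f : nat -> R) : R :=
  match n with O => 0 | S n' => rsum n' f + f n' end.

Definition in_space (n : nat) (x : vec) : Prop := forall i, (n <= i)%nat -> x i = 0.
Definition inner (n : nat) (x y : vec) : R := rsum n (fun i => x i * y i).
Definition vnorm (n : nat) (x : vec) : R := sqrt (inner n x x).
Definition vsub (x y : vec) : vec := fun i => x i - y i.
Definition vcomb (a : R) (x : vec) (b : R) (y : vec) : vec := fun i => a * x i + b * y i.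

(* Y = {0,...,m-1}; probability distributions on Y *)
Definition is_prob (m : nat) (q : vec) : Prop :=
  (forall y, (y < m)%nat -> 0 <= q y) /\ rsum m q = 1.

Definition mu (m : nat) (phi : nat -> vec) (q : vec) : vec :=
  fun i => rsum m (fun y => q y * phi y i).

(* marginal polytope M = { mu(q) : q in Prob(Y) } *)
Definition marg (m : nat) (phi : nat -> vec) (u : vec) : Prop :=
  exists q, is_prob m q /\ u = mu m phi q.

(* s(v,q) = E_{Y~q} S(v,Y) *)
Definition sexp (m : nat) (S : vec -> nat -> R) (v q : vec) : R :=
  rsum m (fun y => q y * S v y).

Definition is_glb (E : R -> Prop) (l : R) : Prop :=
  (forall r, E r -> l <= r) /\ (forall b, (forall r, E r -> b <= r) -> b <= l).

(* delta s(v,q) = r, where V = R^k, i.e. s(v,q) - r = inf_{v' in V} s(v',q) *)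
Definition delta_s_eq (m k : nat) (S : vec -> nat -> R) (v q : vec) (r : R) : Prop :=
  is_glb (fun z => exists v', in_space k v' /\ z = sexp m S v' q) (sexp m S v q - r).

Definition continuous_on_R (n : nat) (A : vec -> Prop) (f : vec -> R) : Prop :=
  forall x, A x -> forall eps, eps > 0 -> exists delta, delta > 0 /\
    forall x', A x' -> vnorm n (vsub x' x) < delta -> Rabs (f x' - f x) < eps.

Definition continuous_on (n p : nat) (A : vec -> Prop) (f : vec -> vec) : Prop :=
  forall x, A x -> forall eps, eps > 0 -> exists delta, delta > 0 /\
    forall x', A x' -> vnorm n (vsub x' x) < delta -> vnorm p (vsub (f x') (f x)) < eps.

Definition strictly_convex_on (n : nat) (A : vec -> Prop) (h : vec -> R) : Prop :=
  forall x y, A x -> A y -> x <> y -> forall l, 0 < l < 1 ->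
    h (vcomb l x (1 - l) y) < l * h x + (1 - l) * h y.

Definition differentiable_on (n : nat) (A : vec -> Prop) (h : vec -> R) (grad : vec -> vec) : Prop :=
  forall u, A u -> forall eps, eps > 0 -> exists delta, delta > 0 /\
    forall u', A u' -> vnorm n (vsub u' u) < delta ->
      Rabs (h u' - h u - inner n (vsub u' u) (grad u)) <= eps * vnorm n (vsub u' u).

(* g lies in the direction space of aff(M) = span { phi y - phi 0 } *)
Definition aff_dir (m : nat) (phi : nat -> vec) (g : vec) : Prop :=
  exists c : nat -> R, g = fun i => rsum m (fun y => c y * (phi y i - phi 0%nat i)).

Definition bregman (n : nat) (h : vec -> R) (grad : vec -> vec) (u' u : vec) : R :=
  h u' - h u - inner n (vsub u' u) (grad u).

(* Write psi_y = phi y - phi 0 and call w : Y -> R a kernel direction when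
   sum_y w_y = 0 and sum_y w_y phi y = 0, so that a distribution P dominating
   eps |w| can move to P +- eps w without changing mu(P).

   1. For every kernel direction w, the kernel functional u |-> s(t u, w) is
      constant on M (kernel_functional_constant).  Optimality of t (mu P) at
      P +- eps w, compared with that of t (mu P'), bounds its increments by a
      cross term that is o(|P - P'|) by continuity of S o t (kernel_gap_bound).
      Along a segment of distributions kept inside the simplex the functional
      thus has zero derivative, hence is constant (flat_01); letting the
      segment approach the boundary gives the claim by continuity.
   2. Hence the reduced loss y |-> S (t u) y - S (t u) 0 (minus its value at
      u = phi 0) is orthogonal to the kernel of the Gram matrix of the psi_y,
      and solving the symmetric Gram system with a pseudo-inverse (module
      GramSystem) gives a vector dual u in span(psi) representing it.
   3. Every loss S (t u) y is then affine in phi y with slope grad u = - dual u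
      (loss_affine), and with the potential h u = - S (t u) 0 + <phi 0 - u, dual u>
      the excess expected loss at t u is exactly D_h(mu q, u)
      (excess_loss_bregman).  Uniqueness of the minimiser and injectivity of t
      make D_h positive off the diagonal, so h is strictly convex; continuity
      of grad and D_h(u', u) + D_h(u, u') = <u' - u, grad u' - grad u> give
      differentiability. *)

From Stdlib Require Import Reals Lra Lia FunctionalExtensionality Classical.
From mathcomp Require all_boot all_algebra Rstruct.
Open Scope R_scope.

(** Symmetric linear systems *)

Module GramSystem.
Import all_boot all_algebra Rstruct.
Local Open Scope ring_scope.

(* The system [x *m K = b] is solved by [x = b *m pinvmx K] as soon as [b] is
   orthogonal to the left kernel of [K]: for symmetric [K] the range is the
   orthogonal complement of the kernel. *)
Lemma sym_pinv_solves {F : fieldType} {m} {K : 'M[F]_m} {b : 'rV[F]_m} :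
  K^T = K -> (forall w : 'rV_m, w *m K = 0 -> w *m b^T = 0) ->
  b *m pinvmx K *m K = b.
Proof.
move=> sK hb; apply: mulmxKpV.
set N := kermx K.
have NK : N *m K = 0 by exact: mulmx_ker.
have Nb : N *m b^T = 0.
  apply/row_matrixP => i; rewrite row_mul row0; apply: hb.
  by rewrite -row_mul NK row0.
have bsub : (b <= kermx N^T)%MS.
  by apply/sub_kermxP; rewrite -[b]trmxK -trmx_mul Nb trmx0.
have Ksub : (K <= kermx N^T)%MS.
  by apply/sub_kermxP; rewrite -{1}sK -trmx_mul NK trmx0.
have rk : (\rank (kermx N^T) <= \rank K)%N.
  by rewrite mxrank_ker mxrank_tr mxrank_ker subKn ?rank_leq_row.
have [_ e] := mxrank_leqif_sup Ksub.
by apply: submx_trans bsub _; rewrite -e eqn_leq rk (mxrankS Ksub).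
Qed.

Lemma rsum_big n (f : nat -> R) : rsum n f = \sum_(i < n) f i.
Proof. by elim: n => [|n IH] /=; rewrite ?big_ord0 // big_ord_recr /= IH. Qed.

Definition mx_of m (A : nat -> nat -> R) : 'M[R]_m := \matrix_(i < m, j < m) A i j.

Definition fun_of_mx m (A : 'M[R]_m) (x y : nat) : R :=
  match (insub x : option 'I_m), (insub y : option 'I_m) with
  | Some i, Some j => A i j | _, _ => 0 end.

Arguments fun_of_mx {m}.

Lemma fun_of_mxE m (A : 'M[R]_m) (i j : 'I_m) : fun_of_mx A i j = A i j.
Proof. by rewrite /fun_of_mx !valK. Qed.

Definition pinv m (K : nat -> nat -> R) : nat -> nat -> R :=
  fun_of_mx (pinvmx (mx_of m K)).

Definition fun_of_row m (w : 'rV[R]_m) (y : nat) : R :=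
  if (insub y : option 'I_m) is Some i then w 0 i else 0.

Arguments fun_of_row {m}.

Lemma fun_of_rowE m (w : 'rV[R]_m) (i : 'I_m) : fun_of_row w i = w 0 i.
Proof. by rewrite /fun_of_row valK. Qed.

Lemma pinv_solves m (K : nat -> nat -> R) (b : nat -> R) :
  (forall y z, K y z = K z y) ->
  (forall w : nat -> R,
     (forall z, (z < m)%coq_nat -> rsum m (fun y => w y * K y z) = 0) ->
     rsum m (fun y => w y * b y) = 0) ->
  forall z, (z < m)%coq_nat ->
    rsum m (fun y => rsum m (fun x => b x * pinv m K x y) * K y z) = b z.
Proof.
move=> Ksym hb z /ltP zm.
pose br := \row_(j < m) b j.
have sK : (mx_of m K)^T = mx_of m K by apply/matrixP => i j; rewrite !mxE Ksym.
have orth : forall w : 'rV_m, w *m mx_of m K = 0 -> w *m br^T = 0.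
  move=> w wK; apply/matrixP => i j; rewrite [i]ord1 [j]ord1 !mxE.
  under eq_bigr => y _ do rewrite !mxE.
  rewrite -[RHS](hb (fun_of_row w)); first rewrite rsum_big.
    by apply: eq_bigr => y _; rewrite fun_of_rowE.
  move=> z' /ltP z'm; rewrite rsum_big.
  have := congr1 (fun A : 'M[R]_(1, m) => A 0 (Ordinal z'm)) wK; rewrite !mxE => e.
  rewrite -[RHS]e; apply: eq_bigr => y _; by rewrite fun_of_rowE mxE.
have := congr1 (fun A : 'M[R]_(1, m) => A 0 (Ordinal zm)) (sym_pinv_solves sK orth).
rewrite !mxE => <-; rewrite rsum_big; apply: eq_bigr => y _.
rewrite rsum_big !mxE; congr (_ * _).
by apply: eq_bigr => x _; rewrite mxE /pinv fun_of_mxE.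
Qed.

End GramSystem.

Lemma rsum_ext n f g : (forall i, (i < n)%nat -> f i = g i) -> rsum n f = rsum n g.
Proof.
  induction n; simpl; intros H; auto.
  rewrite IHn by (intros; apply H; lia). rewrite H by lia. reflexivity.
Qed.

Lemma rsum_plus n f g : rsum n (fun i => f i + g i) = rsum n f + rsum n g.
Proof. induction n; simpl; [lra | rewrite IHn; lra]. Qed.

Lemma rsum_minus n f g : rsum n (fun i => f i - g i) = rsum n f - rsum n g.
Proof. induction n; simpl; [lra | rewrite IHn; lra]. Qed.

Lemma rsum_scal n c f : rsum n (fun i => c * f i) = c * rsum n f.
Proof. induction n; simpl; [lra | rewrite IHn; lra]. Qed.

Lemma rsum_scal_r n c f : rsum n (fun i => f i * c) = rsum n f * c.
Proof. induction n; simpl; [lra | rewrite IHn; lra]. Qed.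

Lemma rsum_const n c : rsum n (fun _ => c) = INR n * c.
Proof. induction n; simpl; [lra | rewrite IHn]. destruct n; simpl; lra. Qed.

Lemma rsum_zero n f : (forall i, (i < n)%nat -> f i = 0) -> rsum n f = 0.
Proof. intros H. rewrite (rsum_ext n f (fun _ => 0)) by auto. rewrite rsum_const; lra. Qed.

Lemma rsum_swap n m (f : nat -> nat -> R) :
  rsum n (fun i => rsum m (fun j => f i j)) = rsum m (fun j => rsum n (fun i => f i j)).
Proof.
  induction n; simpl.
  - rewrite rsum_zero; auto.
  - rewrite IHn, <- rsum_plus. reflexivity.
Qed.

Lemma rsum_le n f g : (forall i, (i < n)%nat -> f i <= g i) -> rsum n f <= rsum n g.
Proof.
  induction n; simpl; intros H; [lra|].
  assert (rsum n f <= rsum n g) by (apply IHn; intros; apply H; lia).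
  assert (f n <= g n) by (apply H; lia). lra.
Qed.

Lemma rsum_nonneg n f : (forall i, (i < n)%nat -> 0 <= f i) -> 0 <= rsum n f.
Proof. intros H. rewrite <- (Rmult_0_r (INR n)), <- rsum_const. apply rsum_le; auto. Qed.

Lemma rsum_abs n f : Rabs (rsum n f) <= rsum n (fun i => Rabs (f i)).
Proof.
  induction n; simpl; [rewrite Rabs_R0; lra|].
  eapply Rle_trans; [apply Rabs_triang | lra].
Qed.

Lemma rsum_term n f i : (forall j, (j < n)%nat -> 0 <= f j) -> (i < n)%nat -> f i <= rsum n f.
Proof.
  induction n; intros H Hi; [lia|]. simpl.
  destruct (Nat.eq_dec i n) as [->|ne].
  - assert (0 <= rsum n f) by (apply rsum_nonneg; intros; apply H; lia). lra.
  - assert (f i <= rsum n f) by (apply IHn; [intros; apply H|]; lia).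
    assert (0 <= f n) by (apply H; lia). lra.
Qed.

Lemma inner_sym n x y : inner n x y = inner n y x.
Proof. unfold inner. apply rsum_ext; intros; ring. Qed.

Lemma inner_lin_l n a x b y z :
  inner n (vcomb a x b y) z = a * inner n x z + b * inner n y z.
Proof. unfold inner, vcomb. rewrite <- !rsum_scal, <- rsum_plus. apply rsum_ext; intros; ring. Qed.

Lemma inner_sub_l n x y z : inner n (vsub x y) z = inner n x z - inner n y z.
Proof. unfold inner, vsub. rewrite <- rsum_minus. apply rsum_ext; intros; ring. Qed.

Lemma inner_sub_r n x y z : inner n z (vsub x y) = inner n z x - inner n z y.
Proof. unfold inner, vsub. rewrite <- rsum_minus. apply rsum_ext; intros; ring. Qed.

Lemma inner_opp_r n x y : inner n x (fun i => - y i) = - inner n x y.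
Proof.
  unfold inner. replace (- _) with ((-1) * rsum n (fun i => x i * y i)) by ring.
  rewrite <- rsum_scal. apply rsum_ext; intros; ring.
Qed.

Lemma inner_self_zero n x : inner n x x = 0 -> forall i, (i < n)%nat -> x i = 0.
Proof.
  intros H i Hi.
  assert (x i * x i <= inner n x x)
    by (apply (rsum_term n (fun i => x i * x i)); auto; intros; nra).
  nra.
Qed.

Lemma vnorm_nonneg n x : 0 <= vnorm n x.
Proof. apply sqrt_pos. Qed.

Lemma vnorm_scal n c x : vnorm n (fun i => c * x i) = Rabs c * vnorm n x.
Proof.
  unfold vnorm, inner.
  replace (rsum n (fun i => c * x i * (c * x i))) with ((c * c) * rsum n (fun i => x i * x i)).
  - rewrite sqrt_mult_alt by nra. rewrite <- sqrt_Rsqr_abs. reflexivity.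
  - rewrite <- rsum_scal. apply rsum_ext; intros; ring.
Qed.

Lemma coord_le_vnorm n x i : (i < n)%nat -> Rabs (x i) <= vnorm n x.
Proof.
  intros Hi. unfold vnorm. rewrite <- sqrt_Rsqr_abs. apply sqrt_le_1_alt.
  unfold Rsqr. apply (rsum_term n (fun i => x i * x i)); auto. intros; nra.
Qed.

Lemma inner_bound n a b : Rabs (inner n a b) <= vnorm n a * rsum n (fun i => Rabs (b i)).
Proof.
  unfold inner. eapply Rle_trans; [apply rsum_abs|].
  rewrite <- rsum_scal. apply rsum_le. intros i Hi. rewrite Rabs_mult.
  apply Rmult_le_compat_r; [apply Rabs_pos | apply coord_le_vnorm; auto].
Qed.

Lemma vcomb_neq x y l : x <> y -> 0 < l < 1 ->
  vcomb l x (1 - l) y <> x /\ vcomb l x (1 - l) y <> y.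
Proof.
  intros nxy Hl. split; intro E; apply nxy; apply functional_extensionality; intro i;
    assert (Ei := f_equal (fun f => f i) E); unfold vcomb in Ei; simpl in Ei.
  - assert (Hz : (1 - l) * (y i - x i) = 0) by lra.
    apply Rmult_integral in Hz. destruct Hz; lra.
  - assert (Hz : l * (x i - y i) = 0) by lra.
    apply Rmult_integral in Hz. destruct Hz; lra.
Qed.

(** Distributions on Y = {0,...,m-1} and their mean embeddings *)

Lemma mu_lin m phi a q b q' :
  mu m phi (fun y => a * q y + b * q' y) = vcomb a (mu m phi q) b (mu m phi q').
Proof.
  apply functional_extensionality; intro i. unfold mu, vcomb.
  rewrite <- !rsum_scal, <- rsum_plus. apply rsum_ext; intros; ring.
Qed.

Lemma sexp_lin m S v a q b q' :
  sexp m S v (fun y => a * q y + b * q' y) = a * sexp m S v q + b * sexp m S v q'.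
Proof. unfold sexp. rewrite <- !rsum_scal, <- rsum_plus. apply rsum_ext; intros; ring. Qed.

Lemma inner_mu m d phi q g : inner d (mu m phi q) g = rsum m (fun y => q y * inner d (phi y) g).
Proof.
  unfold inner, mu.
  transitivity (rsum d (fun i => rsum m (fun y => q y * (phi y i * g i)))).
  - apply rsum_ext; intros. rewrite <- rsum_scal_r. apply rsum_ext; intros; ring.
  - rewrite rsum_swap. apply rsum_ext; intros. apply rsum_scal.
Qed.

Lemma inner_mu_bound m d phi c x :
  Rabs (inner d x (mu m phi c)) <= vnorm d x * rsum m (fun z => Rabs (c z) * rsum d (fun i => Rabs (phi z i))).
Proof.
  rewrite inner_sym, inner_mu. eapply Rle_trans; [apply rsum_abs|].
  rewrite <- rsum_scal. apply rsum_le. intros z Hz. rewrite Rabs_mult.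
  replace (vnorm d x * _) with (Rabs (c z) * (vnorm d x * rsum d (fun i => Rabs (phi z i)))) by ring.
  apply Rmult_le_compat_l; [apply Rabs_pos|]. rewrite inner_sym. apply inner_bound.
Qed.

Lemma sexp_diff_bound m S v v' w e :
  (forall y, (y < m)%nat -> Rabs (S v y - S v' y) <= e) ->
  Rabs (sexp m S v w - sexp m S v' w) <= rsum m (fun y => Rabs (w y)) * e.
Proof.
  intros H. unfold sexp. rewrite <- rsum_minus. eapply Rle_trans; [apply rsum_abs|].
  rewrite <- rsum_scal_r. apply rsum_le. intros y Hy.
  replace (w y * S v y - w y * S v' y) with (w y * (S v y - S v' y)) by ring.
  rewrite Rabs_mult. apply Rmult_le_compat_l; [apply Rabs_pos | auto].
Qed.

Lemma prob_comb m q q' l : is_prob m q -> is_prob m q' -> 0 <= l <= 1 ->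
  is_prob m (fun y => l * q y + (1 - l) * q' y).
Proof.
  intros [H1 H2] [H1' H2'] Hl. split.
  - intros y Hy. specialize (H1 y Hy). specialize (H1' y Hy). nra.
  - rewrite rsum_plus, !rsum_scal, H2, H2'. ring.
Qed.

Lemma marg_convex m phi x y l : marg m phi x -> marg m phi y -> 0 <= l <= 1 ->
  marg m phi (vcomb l x (1 - l) y).
Proof.
  intros [qx [Hqx ->]] [qy [Hqy ->]] Hl.
  exists (fun i => l * qx i + (1 - l) * qy i). split.
  - apply prob_comb; auto.
  - rewrite mu_lin. reflexivity.
Qed.

Definition point0 : vec := fun y => if Nat.eqb y 0 then 1 else 0.

Lemma rsum_point0 m f : (0 < m)%nat -> rsum m (fun y => point0 y * f y) = f 0%nat.
Proof.
  induction m; intros Hm; [lia|]. simpl. destruct m.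
  - unfold point0. simpl. lra.
  - rewrite IHm by lia. unfold point0. simpl. lra.
Qed.

Lemma point0_mass m : (0 < m)%nat -> rsum m point0 = 1.
Proof. intros Hm. rewrite <- (rsum_point0 m (fun _ => 1)) by auto. apply rsum_ext; intros; ring. Qed.

Lemma marg_phi0 m phi : (0 < m)%nat -> marg m phi (phi 0%nat).
Proof.
  intros Hm. exists point0. split; [split|].
  - intros y _. unfold point0. destruct (Nat.eqb y 0); lra.
  - apply point0_mass; auto.
  - apply functional_extensionality; intro i. unfold mu.
    rewrite rsum_point0; auto.
Qed.

(* Directions w along which a distribution can move without changing mu:
   zero total mass and zero mean embedding. *)
Definition kernel_dir (m : nat) (phi : nat -> vec) (w : vec) : Prop :=
  rsum m w = 0 /\ forall i, rsum m (fun y => w y * phi y i) = 0.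

Lemma perturb_in_fibre m (phi : nat -> vec) P w s : is_prob m P -> kernel_dir m phi w ->
  (forall y, (y < m)%nat -> Rabs s * Rabs (w y) <= P y) ->
  is_prob m (fun y => 1 * P y + s * w y) /\ mu m phi (fun y => 1 * P y + s * w y) = mu m phi P.
Proof.
  intros [HP1 HP2] [Hw Hwphi] Hdom. split; [split|].
  - intros y Hy. specialize (Hdom y Hy). rewrite <- Rabs_mult in Hdom.
    assert (h := Rle_abs (- (s * w y))). rewrite Rabs_Ropp in h. lra.
  - rewrite rsum_plus, !rsum_scal, HP2, Hw. ring.
  - rewrite mu_lin. apply functional_extensionality; intro i. unfold vcomb.
    replace (mu m phi w i) with 0 by (symmetry; apply Hwphi). ring.
Qed.

Definition uniform (m : nat) : vec := fun _ => / INR m.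

Definition mixture (m : nat) (q q' : vec) (eta l : R) : vec :=
  fun y => (1 - eta) * ((1 - l) * q y + l * q' y) + eta * uniform m y.

Lemma mixture_prob m q q' eta l : (0 < m)%nat -> is_prob m q -> is_prob m q' ->
  0 < eta <= 1 -> 0 <= l <= 1 ->
  is_prob m (mixture m q q' eta l) /\ forall y, (y < m)%nat -> eta / INR m <= mixture m q q' eta l y.
Proof.
  intros Hm [Hq1 Hq2] [Hq1' Hq2'] He Hl.
  assert (Hmp : INR m > 0) by (apply lt_0_INR; lia).
  assert (Hlow : forall y, (y < m)%nat -> eta / INR m <= mixture m q q' eta l y).
  { intros y Hy. unfold mixture, uniform. specialize (Hq1 y Hy). specialize (Hq1' y Hy).
    assert (0 <= (1 - eta) * ((1 - l) * q y + l * q' y)) by (apply Rmult_le_pos; nra).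
    unfold Rdiv. lra. }
  split; [split|]; auto.
  - intros y Hy. specialize (Hlow y Hy).
    assert (0 <= eta / INR m) by (unfold Rdiv; apply Rmult_le_pos; [lra | left; apply Rinv_0_lt_compat; lra]). lra.
  - unfold mixture, uniform.
    rewrite rsum_plus, rsum_scal, rsum_plus, !rsum_scal, rsum_const, Hq2, Hq2'. field. lra.
Qed.

Lemma mixture_swap m q q' eta : mixture m q q' eta 1 = mixture m q' q eta 0.
Proof. apply functional_extensionality; intro y. unfold mixture. ring. Qed.

Lemma mixture_diff_bound m q q' eta l l' y : is_prob m q -> is_prob m q' -> 0 < eta <= 1 ->
  (y < m)%nat ->
  Rabs (mixture m q q' eta l' y - mixture m q q' eta l y) <= Rabs (l' - l) * (q y + q' y).
Proof.
  intros [Hq _] [Hq' _] He Hy. specialize (Hq y Hy). specialize (Hq' y Hy). unfold mixture.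
  replace (_ - _) with ((1 - eta) * ((l' - l) * (q' y - q y))) by ring.
  rewrite !Rabs_mult, (Rabs_right (1 - eta)) by lra.
  assert (Rabs (q' y - q y) <= q y + q' y) by (apply Rabs_le; lra).
  assert (A : Rabs (l' - l) * Rabs (q' y - q y) <= Rabs (l' - l) * (q y + q' y))
    by (apply Rmult_le_compat_l; [apply Rabs_pos | auto]).
  assert (0 <= Rabs (l' - l) * Rabs (q' y - q y))
    by (apply Rmult_le_pos; apply Rabs_pos).
  nra.
Qed.

Lemma mixture_dist m d phi q q' eta l l' : 0 < eta <= 1 ->
  vnorm d (vsub (mu m phi (mixture m q q' eta l')) (mu m phi (mixture m q q' eta l)))
    <= Rabs (l' - l) * vnorm d (vsub (mu m phi q') (mu m phi q)).
Proof.
  intros He.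
  replace (vsub (mu m phi (mixture m q q' eta l')) (mu m phi (mixture m q q' eta l)))
    with (fun i => ((1 - eta) * (l' - l)) * vsub (mu m phi q') (mu m phi q) i).
  - rewrite vnorm_scal, Rabs_mult, (Rabs_right (1 - eta)) by lra.
    assert (0 <= Rabs (l' - l) * vnorm d (vsub (mu m phi q') (mu m phi q)))
      by (apply Rmult_le_pos; [apply Rabs_pos | apply vnorm_nonneg]).
    nra.
  - apply functional_extensionality; intro i. unfold vsub, mu, mixture.
    rewrite <- !rsum_minus, <- rsum_scal. apply rsum_ext; intros; ring.
Qed.

Lemma mixture_start_dist m d phi q q' eta :
  vnorm d (vsub (mu m phi (mixture m q q' eta 0)) (mu m phi q))
    = Rabs eta * vnorm d (vsub (mu m phi (uniform m)) (mu m phi q)).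
Proof.
  rewrite <- vnorm_scal. f_equal. apply functional_extensionality; intro i.
  unfold vsub, mu, mixture. rewrite <- !rsum_minus, <- rsum_scal. apply rsum_ext; intros; ring.
Qed.

Lemma cross_bound m (P P' Q Q' X : vec) c e : 0 <= c -> 0 <= e -> is_prob m Q -> is_prob m Q' ->
  (forall y, (y < m)%nat -> Rabs (P y - P' y) <= c * (Q y + Q' y)) ->
  (forall y, (y < m)%nat -> Rabs (X y) <= e) ->
  rsum m (fun y => (P y - P' y) * X y) <= c * e * 2.
Proof.
  intros Hc He [HQ1 HQ2] [HQ1' HQ2'] HP HX.
  eapply Rle_trans; [apply Rle_abs|]. eapply Rle_trans; [apply rsum_abs|].
  apply Rle_trans with (rsum m (fun y => c * e * (Q y + Q' y))).
  - apply rsum_le. intros y Hy. rewrite Rabs_mult.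
    specialize (HP y Hy). specialize (HX y Hy).
    assert (0 <= Rabs (X y)) by apply Rabs_pos.
    apply Rle_trans with (c * (Q y + Q' y) * e); [apply Rmult_le_compat; auto; apply Rabs_pos | nra].
  - rewrite rsum_scal, rsum_plus, HQ2, HQ2'. lra.
Qed.

(** Elementary real analysis *)

Lemma eq_of_close x y : (forall e, e > 0 -> Rabs (x - y) < e) -> x = y.
Proof.
  intros H. destruct (Req_dec x y) as [|ne]; auto. exfalso.
  assert (h := H (Rabs (x - y)) ltac:(apply Rabs_pos_lt; lra)). lra.
Qed.

Lemma small_times_bounded a C delta : 0 <= a -> 0 <= C -> delta > 0 ->
  a <= delta / (C + 1) -> a * C < delta.
Proof.
  intros Ha HC Hd Hle.
  assert (a * (C + 1) <= delta).
  { apply Rle_trans with (delta / (C + 1) * (C + 1)); [apply Rmult_le_compat_r; lra|].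
    right; field; lra. }
  nra.
Qed.

(* A function on [0,1] that is locally e-Lipschitz at every point satisfies
   |g 1 - g 0| <= e (continuous induction, via the supremum of the good set). *)
Lemma local_lipschitz_01 (g : R -> R) e : e > 0 ->
  (forall l, 0 <= l <= 1 -> exists rho, rho > 0 /\ forall l', 0 <= l' <= 1 ->
     Rabs (l' - l) < rho -> Rabs (g l' - g l) <= e * Rabs (l' - l)) ->
  Rabs (g 1 - g 0) <= e.
Proof.
  intros He Hg.
  set (E := fun x => 0 <= x <= 1 /\ forall z, 0 <= z <= x -> Rabs (g z - g 0) <= e * z).
  assert (E0 : E 0).
  { split; [lra|]. intros z Hz. replace z with 0 by lra.
    unfold Rminus. rewrite Rplus_opp_r, Rabs_R0. lra. }
  assert (Eb : bound E) by (exists 1; intros x [Hx _]; lra).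
  destruct (completeness E Eb (ex_intro _ 0 E0)) as [s [Hs_ub Hs_lub]].
  assert (s0 : 0 <= s) by (apply Hs_ub; auto).
  assert (s1 : s <= 1) by (apply Hs_lub; intros x [Hx _]; lra).
  (* below the supremum the estimate holds *)
  assert (Below : forall z, 0 <= z < s -> Rabs (g z - g 0) <= e * z).
  { intros z Hz. destruct (classic (exists x, E x /\ z < x)) as [[x [[_ Ex] zx]]|nx].
    - apply Ex; lra.
    - exfalso. assert (s <= z); [|lra].
      apply Hs_lub. intros x Ex. destruct (Rle_dec x z); auto.
      exfalso; apply nx; exists x; split; auto; lra. }
  destruct (Hg s (conj s0 s1)) as [rho [Hrho Hloc]].
  (* it also holds at the supremum, by local Lipschitz continuity from the left *)
  assert (Es : E s).
  { split; [lra|]. intros z [z0 zs]. destruct (Req_dec z s) as [->|nzs]; [|apply Below; lra].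
    destruct (Req_dec s 0) as [->|ne0].
    { unfold Rminus. rewrite Rplus_opp_r, Rabs_R0. lra. }
    set (z := Rmax 0 (s - rho / 2)).
    assert (z0' : 0 <= z) by apply Rmax_l.
    assert (zs' : z < s) by (apply Rmax_lub_lt; lra).
    assert (zs2 : s - rho / 2 <= z) by apply Rmax_r.
    assert (h1 := Below z (conj z0' zs')).
    assert (h2 := Hloc z ltac:(lra) ltac:(rewrite Rabs_left; lra)).
    rewrite (Rabs_left (z - s)) in h2 by lra.
    replace (g s - g 0) with ((g s - g z) + (g z - g 0)) by ring.
    eapply Rle_trans; [apply Rabs_triang|]. rewrite Rabs_minus_sym. lra. }
  (* and it propagates to the right of s unless s = 1 *)
  assert (s_eq : s = 1).
  { destruct (Req_dec s 1) as [|ne1]; auto. exfalso.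
    set (z' := Rmin 1 (s + rho / 2)).
    assert (z's : s < z') by (apply Rmin_glb_lt; lra).
    assert (z'1 : z' <= 1) by apply Rmin_l.
    assert (z'2 : z' <= s + rho / 2) by apply Rmin_r.
    assert (Ez' : E z').
    { split; [lra|]. intros z [z0 zz].
      destruct (Rle_dec z s); [apply (proj2 Es); lra|].
      assert (h2 := Hloc z ltac:(lra) ltac:(rewrite Rabs_right; lra)).
      rewrite (Rabs_right (z - s)) in h2 by lra.
      replace (g z - g 0) with ((g z - g s) + (g s - g 0)) by ring.
      assert (h1 := proj2 Es s ltac:(lra)).
      eapply Rle_trans; [apply Rabs_triang | lra]. }
    assert (z' <= s) by (apply Hs_ub; auto). lra. }
  rewrite s_eq in Es. assert (h := proj2 Es 1 ltac:(lra)). lra.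
Qed.

Lemma flat_01 (g : R -> R) :
  (forall l, 0 <= l <= 1 -> forall e, e > 0 -> exists rho, rho > 0 /\
     forall l', 0 <= l' <= 1 -> Rabs (l' - l) < rho -> Rabs (g l' - g l) <= e * Rabs (l' - l)) ->
  g 1 = g 0.
Proof.
  intros Hg. apply eq_of_close. intros e He.
  assert (h := local_lipschitz_01 g (e / 2) ltac:(lra) ltac:(intros l Hl; apply Hg; auto; lra)).
  lra.
Qed.

Lemma uniform_delta (m : nat) (P : nat -> R -> Prop) :
  (forall y r r', 0 < r' <= r -> P y r -> P y r') ->
  (forall y, (y < m)%nat -> exists r, r > 0 /\ P y r) ->
  exists r, r > 0 /\ forall y, (y < m)%nat -> P y r.
Proof.
  intros mono. induction m; intros H.
  - exists 1. split; [lra | intros; lia].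
  - destruct IHm as [r1 [Hr1 H1]]; [intros; apply H; lia|].
    destruct (H m ltac:(lia)) as [r2 [Hr2 H2]].
    assert (Hmin : 0 < Rmin r1 r2) by (apply Rmin_glb_lt; lra).
    exists (Rmin r1 r2). split; auto.
    intros y Hy. destruct (Nat.eq_dec y m) as [->|ne].
    + apply (mono m r2); auto. split; [auto | apply Rmin_r].
    + apply (mono y r1); [split; [auto | apply Rmin_l] | apply H1; lia].
Qed.

(** The surrogate loss *)

Section SurrogateLoss.

Variables (m d k : nat) (phi : nat -> vec) (S : vec -> nat -> R) (t : vec -> vec).

Hypothesis m_pos : (0 < m)%nat.
Hypothesis phi_space : forall y, (y < m)%nat -> in_space d (phi y).
Hypothesis S_cont : forall y, (y < m)%nat -> continuous_on_R k (in_space k) (fun v => S v y).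
Hypothesis t_space : forall u, marg m phi u -> in_space k (t u).
Hypothesis t_cont : continuous_on d k (marg m phi) t.
Hypothesis t_inj : forall u u', marg m phi u -> marg m phi u' -> t u = t u' -> u = u'.
Hypothesis t_argmin : forall q, is_prob m q -> forall v, in_space k v ->
  v <> t (mu m phi q) -> sexp m S (t (mu m phi q)) q < sexp m S v q.

Lemma t_minimizes q v : is_prob m q -> in_space k v ->
  sexp m S (t (mu m phi q)) q <= sexp m S v q.
Proof.
  intros Hq Hv. destruct (classic (v = t (mu m phi q))) as [->|ne]; [lra|].
  left; apply t_argmin; auto.
Qed.

Lemma loss_cont_uniform u : marg m phi u -> forall e, e > 0 -> exists delta, delta > 0 /\
  forall u', marg m phi u' -> vnorm d (vsub u' u) < delta ->
    forall y, (y < m)%nat -> Rabs (S (t u') y - S (t u) y) < e.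
Proof.
  intros Hu e He.
  destruct (uniform_delta m (fun y r => forall v, in_space k v -> vnorm k (vsub v (t u)) < r ->
              Rabs (S v y - S (t u) y) < e)) as [r [Hr Hball]].
  - intros y r r' Hr' HP v Hv Hn. apply HP; auto. lra.
  - intros y Hy. destruct (S_cont y Hy (t u) (t_space u Hu) e He) as [r [Hr Hball]].
    exists r; split; auto.
  - destruct (t_cont u Hu r Hr) as [delta [Hdelta Ht]].
    exists delta; split; auto.
Qed.

(* Optimality of t (mu P) for the perturbed distributions P +- eps w (which have
   the same mean embedding) and of t (mu P') for P' +- eps w, added up, bounds
   the difference of the "kernel functional" v |-> s(v, w) at the two points. *)
Lemma kernel_gap_bound P P' w eps : eps > 0 -> is_prob m P -> is_prob m P' -> kernel_dir m phi w ->
  (forall y, (y < m)%nat -> eps * Rabs (w y) <= P y) ->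
  (forall y, (y < m)%nat -> eps * Rabs (w y) <= P' y) ->
  2 * eps * Rabs (sexp m S (t (mu m phi P)) w - sexp m S (t (mu m phi P')) w) <=
    rsum m (fun y => (P y - P' y) * (S (t (mu m phi P')) y - S (t (mu m phi P)) y)).
Proof.
  intros Heps HP HP' Hw HdomP HdomP'.
  assert (perturbed_opt : forall Q s, is_prob m Q ->
    (forall y, (y < m)%nat -> eps * Rabs (w y) <= Q y) -> Rabs s = eps ->
    forall Q', is_prob m Q' ->
    sexp m S (t (mu m phi Q)) Q + s * sexp m S (t (mu m phi Q)) w
      <= sexp m S (t (mu m phi Q')) Q + s * sexp m S (t (mu m phi Q')) w).
  { intros Q s HQ HdomQ Hs Q' HQ'.
    destruct (perturb_in_fibre m phi Q w s HQ Hw ltac:(rewrite Hs; auto)) as [Hp Hmu].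
    assert (h := t_minimizes _ (t (mu m phi Q')) Hp (t_space _ (ex_intro _ Q' (conj HQ' eq_refl)))).
    rewrite Hmu, !sexp_lin in h. lra. }
  assert (Habs : Rabs eps = eps) by (apply Rabs_right; lra).
  assert (Habs' : Rabs (- eps) = eps) by (rewrite Rabs_Ropp; auto).
  assert (h1 := perturbed_opt P eps HP HdomP Habs P' HP').
  assert (h2 := perturbed_opt P (- eps) HP HdomP Habs' P' HP').
  assert (h3 := perturbed_opt P' eps HP' HdomP' Habs P HP).
  assert (h4 := perturbed_opt P' (- eps) HP' HdomP' Habs' P HP).
  replace (rsum m _) with
    ((sexp m S (t (mu m phi P')) P - sexp m S (t (mu m phi P)) P) +
     (sexp m S (t (mu m phi P)) P' - sexp m S (t (mu m phi P')) P'))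
    by (unfold sexp; rewrite <- !rsum_minus, <- rsum_plus; apply rsum_ext; intros; ring).
  unfold Rabs. destruct (Rcase_abs _); nra.
Qed.

Lemma mixture_step_bound q q' w eta l l' e :
  is_prob m q -> is_prob m q' -> kernel_dir m phi w -> 0 < eta <= 1 -> 0 <= l <= 1 -> 0 <= l' <= 1 ->
  (forall y, (y < m)%nat -> Rabs (S (t (mu m phi (mixture m q q' eta l))) y -
                                  S (t (mu m phi (mixture m q q' eta l'))) y) <= e) ->
  eta * Rabs (sexp m S (t (mu m phi (mixture m q q' eta l'))) w -
              sexp m S (t (mu m phi (mixture m q q' eta l))) w)
    <= INR m * (rsum m (fun y => Rabs (w y)) + 1) * (Rabs (l' - l) * e).
Proof.
  intros Hq Hq' Hw Heta Hl Hl' Hosc.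
  set (W := rsum m (fun y => Rabs (w y)) + 1).
  assert (Hmp : INR m > 0) by (apply lt_0_INR; lia).
  assert (HwW : forall y, (y < m)%nat -> Rabs (w y) <= W).
  { intros y Hy. unfold W.
    assert (Rabs (w y) <= rsum m (fun y => Rabs (w y)))
      by (apply (rsum_term m (fun y => Rabs (w y))); auto; intros; apply Rabs_pos).
    lra. }
  assert (HW : W > 0)
    by (unfold W; assert (0 <= rsum m (fun y => Rabs (w y))) by (apply rsum_nonneg; intros; apply Rabs_pos); lra).
  assert (He : 0 <= e) by (eapply Rle_trans; [apply Rabs_pos | apply (Hosc 0%nat m_pos)]).
  set (eps := eta / (INR m * W)).
  assert (Heps : eps > 0) by (apply Rdiv_lt_0_compat; [lra | apply Rmult_lt_0_compat; lra]).
  assert (HepsW : eps * W = eta / INR m) by (unfold eps; field; lra).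
  destruct (mixture_prob m q q' eta l m_pos Hq Hq' Heta Hl) as [HP HPlow].
  destruct (mixture_prob m q q' eta l' m_pos Hq Hq' Heta Hl') as [HP' HPlow'].
  assert (Hdom : forall P, (forall y, (y < m)%nat -> eta / INR m <= P y) ->
                 forall y, (y < m)%nat -> eps * Rabs (w y) <= P y).
  { intros P HPl y Hy. specialize (HwW y Hy). specialize (HPl y Hy).
    apply Rle_trans with (eps * W); [apply Rmult_le_compat_l; lra | lra]. }
  assert (Hgap := kernel_gap_bound _ _ w eps Heps HP' HP Hw (Hdom _ HPlow') (Hdom _ HPlow)).
  assert (Hcross := cross_bound m _ _ q q' _ (Rabs (l' - l)) e (Rabs_pos _) He Hq Hq'
    (fun y Hy => mixture_diff_bound m q q' eta l l' y Hq Hq' Heta Hy) Hosc).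
  set (A := Rabs (sexp m S (t (mu m phi (mixture m q q' eta l'))) w -
                  sexp m S (t (mu m phi (mixture m q q' eta l))) w)) in *.
  assert (eps * A <= Rabs (l' - l) * e) by lra.
  replace eta with (eps * (INR m * W)) by (unfold eps; field; lra).
  assert (0 < INR m * W) by (apply Rmult_lt_0_compat; lra).
  nra.
Qed.

Lemma kernel_flat_on_segment q q' w eta :
  is_prob m q -> is_prob m q' -> kernel_dir m phi w -> 0 < eta <= 1 ->
  sexp m S (t (mu m phi (mixture m q q' eta 1))) w = sexp m S (t (mu m phi (mixture m q q' eta 0))) w.
Proof.
  intros Hq Hq' Hw Heta.
  apply (flat_01 (fun l => sexp m S (t (mu m phi (mixture m q q' eta l))) w)).
  intros l Hl e He.
  set (W := INR m * (rsum m (fun y => Rabs (w y)) + 1)).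
  assert (HW : W > 0).
  { apply Rmult_lt_0_compat; [apply lt_0_INR; lia|].
    assert (0 <= rsum m (fun y => Rabs (w y))) by (apply rsum_nonneg; intros; apply Rabs_pos).
    lra. }
  destruct (mixture_prob m q q' eta l m_pos Hq Hq' Heta Hl) as [HP _].
  destruct (loss_cont_uniform _ (ex_intro _ _ (conj HP eq_refl)) (e * eta / W))
    as [delta [Hdelta Hclose]]; [apply Rdiv_lt_0_compat; nra|].
  set (C := vnorm d (vsub (mu m phi q') (mu m phi q))).
  assert (HC : 0 <= C) by apply vnorm_nonneg.
  exists (delta / (C + 1)). split; [apply Rdiv_lt_0_compat; lra|].
  intros l' Hl' Hll'.
  destruct (mixture_prob m q q' eta l' m_pos Hq Hq' Heta Hl') as [HP' _].
  assert (Hnear : vnorm d (vsub (mu m phi (mixture m q q' eta l')) (mu m phi (mixture m q q' eta l))) < delta).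
  { eapply Rle_lt_trans; [apply mixture_dist; auto|].
    apply small_times_bounded; [apply Rabs_pos | auto | auto | fold C; lra]. }
  assert (Hstep := mixture_step_bound q q' w eta l l' (e * eta / W) Hq Hq' Hw Heta Hl Hl'
    ltac:(intros y Hy; rewrite Rabs_minus_sym; left;
          apply (Hclose _ (ex_intro _ _ (conj HP' eq_refl)) Hnear y Hy))).
  fold W in Hstep.
  replace (W * (Rabs (l' - l) * (e * eta / W))) with (eta * (e * Rabs (l' - l))) in Hstep
    by (field; lra).
  apply Rmult_le_reg_l with eta; lra.
Qed.

Lemma mixture_start_close p p' w : is_prob m p -> is_prob m p' ->
  forall e, e > 0 -> exists eta0, eta0 > 0 /\ forall eta, 0 < eta <= eta0 ->
  Rabs (sexp m S (t (mu m phi (mixture m p p' eta 0))) w - sexp m S (t (mu m phi p)) w) < e.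
Proof.
  intros Hp Hp' e He.
  set (Wa := rsum m (fun y => Rabs (w y))).
  assert (HWa : 0 <= Wa) by (apply rsum_nonneg; intros; apply Rabs_pos).
  set (e0 := e / (Wa + 1)).
  assert (He0 : e0 > 0) by (apply Rdiv_lt_0_compat; lra).
  assert (Hsmall : Wa * e0 < e).
  { assert (Heq : (Wa + 1) * e0 = e) by (unfold e0; field; lra). nra. }
  destruct (loss_cont_uniform _ (ex_intro _ p (conj Hp eq_refl)) e0 He0) as [delta [Hdelta Hclose]].
  set (C := vnorm d (vsub (mu m phi (uniform m)) (mu m phi p))).
  assert (HC : 0 <= C) by apply vnorm_nonneg.
  exists (Rmin 1 (delta / (C + 1))).
  split; [apply Rmin_glb_lt; [lra | apply Rdiv_lt_0_compat; lra]|].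
  intros eta [Heta0 Heta].
  assert (Heta1 : eta <= 1) by (eapply Rle_trans; [exact Heta | apply Rmin_l]).
  assert (Heta2 : eta <= delta / (C + 1)) by (eapply Rle_trans; [exact Heta | apply Rmin_r]).
  destruct (mixture_prob m p p' eta 0 m_pos Hp Hp' (conj Heta0 Heta1) ltac:(lra)) as [HP0 _].
  assert (Hnear : vnorm d (vsub (mu m phi (mixture m p p' eta 0)) (mu m phi p)) < delta).
  { rewrite mixture_start_dist, Rabs_right by lra. apply small_times_bounded; auto; lra. }
  eapply Rle_lt_trans; [apply sexp_diff_bound|]; fold Wa; [|exact Hsmall].
  intros y Hy. left. apply (Hclose _ (ex_intro _ _ (conj HP0 eq_refl)) Hnear y Hy).
Qed.

Lemma kernel_functional_constant w : kernel_dir m phi w ->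
  forall u u', marg m phi u -> marg m phi u' -> sexp m S (t u) w = sexp m S (t u') w.
Proof.
  intros Hw u u' [q [Hq ->]] [q' [Hq' ->]].
  apply eq_of_close. intros e He.
  destruct (mixture_start_close q q' w Hq Hq' (e / 2) ltac:(lra)) as [eta1 [Heta1 B0]].
  destruct (mixture_start_close q' q w Hq' Hq (e / 2) ltac:(lra)) as [eta2 [Heta2 B1]].
  set (eta := Rmin 1 (Rmin eta1 eta2)).
  assert (Hle1 : eta <= 1) by apply Rmin_l.
  assert (Hle2 : eta <= eta1) by (eapply Rle_trans; [apply Rmin_r | apply Rmin_l]).
  assert (Hle3 : eta <= eta2) by (eapply Rle_trans; [apply Rmin_r | apply Rmin_r]).
  assert (Heta : 0 < eta) by (apply Rmin_glb_lt; [lra | apply Rmin_glb_lt; lra]).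
  (* both endpoints of the flat segment are close to the endpoints we compare *)
  specialize (B0 eta (conj Heta Hle2)). specialize (B1 eta (conj Heta Hle3)).
  rewrite <- mixture_swap, (kernel_flat_on_segment q q' w eta Hq Hq' Hw (conj Heta Hle1)) in B1.
  replace (sexp m S (t (mu m phi q)) w - sexp m S (t (mu m phi q')) w) with
    ((sexp m S (t (mu m phi (mixture m q q' eta 0))) w - sexp m S (t (mu m phi q')) w) +
     - (sexp m S (t (mu m phi (mixture m q q' eta 0))) w - sexp m S (t (mu m phi q)) w)) by ring.
  eapply Rle_lt_trans; [apply Rabs_triang|]. rewrite Rabs_Ropp. lra.
Qed.

Definition psi (y : nat) : vec := vsub (phi y) (phi 0%nat).

Definition gram (y z : nat) : R := inner d (psi y) (psi z).

Definition reduced_loss (u : vec) (y : nat) : R :=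
  (S (t u) y - S (t (phi 0%nat)) y) - (S (t u) 0%nat - S (t (phi 0%nat)) 0%nat).

(* The reduced loss is orthogonal to the kernel of the Gram matrix; this is where
   the constancy of the kernel functional on M enters. *)
Lemma reduced_loss_orthogonal u : marg m phi u -> forall w : vec,
  (forall z, (z < m)%nat -> rsum m (fun y => w y * gram y z) = 0) ->
  rsum m (fun y => w y * reduced_loss u y) = 0.
Proof.
  intros Hu w Hw.
  (* v = sum_y w_y psi_y has squared norm sum_z w_z (w gram)_z = 0 *)
  set (v := mu m psi w).
  assert (Hv : forall i, v i = 0).
  { assert (Hvv : inner d v v = 0).
    { unfold v at 1. rewrite inner_mu. apply rsum_zero. intros z Hz.
      unfold v. rewrite inner_sym, inner_mu.
      replace (rsum m _) with 0 by (symmetry; apply (Hw z Hz)). ring. }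
    intros i. destruct (Nat.lt_ge_cases i d) as [Hi|Hi]; [apply (inner_self_zero d v Hvv i Hi)|].
    unfold v, mu. apply rsum_zero. intros y Hy. unfold psi, vsub.
    rewrite (phi_space y Hy i Hi), (phi_space 0%nat m_pos i Hi). ring. }
  (* moving the total mass of w onto the label 0 gives a kernel direction *)
  set (w' := fun y => w y - rsum m w * point0 y).
  assert (Hw' : kernel_dir m phi w').
  { split.
    - unfold w'. rewrite rsum_minus, rsum_scal, point0_mass by auto. ring.
    - intros i. rewrite <- (Hv i). unfold v, mu, w', psi, vsub.
      transitivity (rsum m (fun y => w y * phi y i) - rsum m w * rsum m (fun y => point0 y * phi y i)).
      + rewrite <- rsum_scal, <- rsum_minus. apply rsum_ext; intros; ring.
      + rewrite rsum_point0, <- rsum_scal_r, <- rsum_minus by auto. apply rsum_ext; intros; ring. }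
  assert (Hconst := kernel_functional_constant w' Hw' u (phi 0%nat) Hu (marg_phi0 m phi m_pos)).
  unfold sexp in Hconst.
  set (D := fun y => S (t u) y - S (t (phi 0%nat)) y).
  transitivity (rsum m (fun y => w' y * D y)).
  - unfold w'. transitivity (rsum m (fun y => w y * D y) - rsum m w * rsum m (fun y => point0 y * D y)).
    + rewrite rsum_point0 by auto. rewrite <- rsum_scal_r, <- rsum_minus.
      apply rsum_ext; intros; unfold reduced_loss, D; ring.
    + rewrite <- rsum_scal, <- rsum_minus. apply rsum_ext; intros; ring.
  - unfold D. rewrite (rsum_ext m _ (fun y => w' y * S (t u) y - w' y * S (t (phi 0%nat)) y))
      by (intros; ring).
    rewrite rsum_minus, Hconst. ring.
Qed.

Definition coeff (u : vec) (z : nat) : R :=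
  rsum m (fun x => reduced_loss u x * GramSystem.pinv m gram x z).

Definition dual (u : vec) : vec := mu m psi (coeff u).

Definition grad (u : vec) : vec := fun i => - dual u i.

Definition potential (u : vec) : R := - S (t u) 0%nat + inner d (vsub (phi 0%nat) u) (dual u).

Lemma dual_represents u z : marg m phi u -> (z < m)%nat ->
  inner d (psi z) (dual u) = reduced_loss u z.
Proof.
  intros Hu Hz.
  rewrite <- (GramSystem.pinv_solves m gram (reduced_loss u) (fun y z => inner_sym d _ _)
                (reduced_loss_orthogonal u Hu) z Hz).
  unfold dual. rewrite inner_sym, inner_mu. reflexivity.
Qed.

Lemma loss_affine u y : marg m phi u -> (y < m)%nat ->
  S (t u) y = (S (t (phi 0%nat)) y - S (t (phi 0%nat)) 0%nat)
              - potential u - inner d (vsub (phi y) u) (grad u).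
Proof.
  intros Hu Hy. assert (Hrep := dual_represents u y Hu Hy).
  unfold psi, reduced_loss in Hrep. unfold grad, potential.
  rewrite inner_opp_r, !inner_sub_l. rewrite inner_sub_l in Hrep. lra.
Qed.

Lemma excess_loss_bregman u q : marg m phi u -> is_prob m q ->
  sexp m S (t u) q - bregman d potential grad (mu m phi q) u = sexp m S (t (mu m phi q)) q.
Proof.
  intros Hu Hq.
  assert (Haff : forall x, marg m phi x -> sexp m S (t x) q =
    rsum m (fun y => q y * (S (t (phi 0%nat)) y - S (t (phi 0%nat)) 0%nat))
      - potential x - inner d (mu m phi q) (grad x) + inner d x (grad x)).
  { intros x Hx. destruct Hq as [_ Hq1]. unfold sexp.
    rewrite (rsum_ext m _ (fun y => q y * (S (t (phi 0%nat)) y - S (t (phi 0%nat)) 0%nat)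
        - potential x * q y - q y * inner d (phi y) (grad x) + inner d x (grad x) * q y)).
    - rewrite rsum_plus, !rsum_minus, !rsum_scal, Hq1, <- inner_mu. ring.
    - intros y Hy. rewrite (loss_affine x y Hx Hy), inner_sub_l. ring. }
  rewrite (Haff u Hu), (Haff _ (ex_intro _ q (conj Hq eq_refl))).
  unfold bregman. rewrite inner_sub_l. ring.
Qed.

(* Since t (mu q) is the unique minimiser, the divergence is positive off the diagonal. *)
Lemma bregman_pos u u' : marg m phi u -> marg m phi u' -> u' <> u ->
  bregman d potential grad u' u > 0.
Proof.
  intros Hu [q' [Hq' ->]] ne.
  assert (e := excess_loss_bregman u q' Hu Hq').
  assert (sexp m S (t (mu m phi q')) q' < sexp m S (t u) q'); [|lra].
  apply t_argmin; auto.
  intro E. apply ne. symmetry. apply t_inj; auto. exists q'; split; auto.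
Qed.

Lemma bregman_nonneg u u' : marg m phi u -> marg m phi u' -> bregman d potential grad u' u >= 0.
Proof.
  intros Hu Hu'. destruct (classic (u' = u)) as [->|ne].
  - unfold bregman. rewrite inner_sub_l. right; ring.
  - left; apply bregman_pos; auto.
Qed.

Lemma potential_strictly_convex : strictly_convex_on d (marg m phi) potential.
Proof.
  intros x y Hx Hy nxy l Hl.
  set (z := vcomb l x (1 - l) y).
  assert (Hz : marg m phi z) by (apply marg_convex; auto; lra).
  destruct (vcomb_neq x y l nxy Hl) as [nzx nzy].
  assert (Dx := bregman_pos z x Hz Hx (not_eq_sym nzx)).
  assert (Dy := bregman_pos z y Hz Hy (not_eq_sym nzy)).
  unfold bregman in Dx, Dy. rewrite inner_sub_l in Dx, Dy.
  assert (Iz : inner d z (grad z) = l * inner d x (grad z) + (1 - l) * inner d y (grad z))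
    by apply inner_lin_l.
  fold z. nra.
Qed.

Lemma grad_aff_dir u : aff_dir m phi (grad u).
Proof.
  exists (fun y => - coeff u y).
  apply functional_extensionality; intro i. unfold grad, dual, mu, psi, vsub.
  replace (- rsum m _) with ((-1) * rsum m (fun y => coeff u y * (phi y i - phi 0%nat i))) by ring.
  rewrite <- rsum_scal. apply rsum_ext; intros; ring.
Qed.

(* The gradient is continuous on M, in the weak form needed for differentiability. *)
Lemma grad_continuous u : marg m phi u -> forall e, e > 0 -> exists delta, delta > 0 /\
  forall u', marg m phi u' -> vnorm d (vsub u' u) < delta ->
  forall x, Rabs (inner d x (vsub (grad u') (grad u))) <= e * vnorm d x.
Proof.
  intros Hu e He.
  set (P := GramSystem.pinv m gram).
  set (C := rsum m (fun z => rsum m (fun x => Rabs (P x z)) * rsum d (fun i => Rabs (psi z i)))).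
  assert (HC : 0 <= C).
  { apply rsum_nonneg. intros. apply Rmult_le_pos; apply rsum_nonneg; intros; apply Rabs_pos. }
  set (e' := e / (2 * (C + 1))).
  assert (He' : e' > 0) by (apply Rdiv_lt_0_compat; lra).
  assert (He'C : 2 * e' * C <= e).
  { assert (Heq : 2 * e' * (C + 1) = e) by (unfold e'; field; lra). nra. }
  destruct (loss_cont_uniform u Hu e' He') as [delta [Hdelta Hclose]].
  exists delta. split; auto. intros u' Hu' Hn x.
  assert (Hred : forall y, (y < m)%nat -> Rabs (reduced_loss u y - reduced_loss u' y) <= 2 * e').
  { intros y Hy. unfold reduced_loss.
    replace (_ - _) with ((S (t u') 0%nat - S (t u) 0%nat) + - (S (t u') y - S (t u) y)) by ring.
    eapply Rle_trans; [apply Rabs_triang|]. rewrite Rabs_Ropp.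
    assert (h1 := Hclose u' Hu' Hn y Hy). assert (h2 := Hclose u' Hu' Hn 0%nat m_pos). lra. }
  assert (Hcoeff : forall z, Rabs (coeff u z - coeff u' z) <= 2 * e' * rsum m (fun y => Rabs (P y z))).
  { intros z. unfold coeff. fold P. rewrite <- rsum_minus. eapply Rle_trans; [apply rsum_abs|].
    rewrite <- rsum_scal. apply rsum_le. intros y Hy.
    replace (_ - _) with ((reduced_loss u y - reduced_loss u' y) * P y z) by ring.
    rewrite Rabs_mult. apply Rmult_le_compat_r; [apply Rabs_pos | auto]. }
  assert (Hdiff : vsub (grad u') (grad u) = mu m psi (fun z => coeff u z - coeff u' z)).
  { apply functional_extensionality; intro i. unfold vsub, grad, dual, mu.
    rewrite (rsum_ext m (fun z => (coeff u z - coeff u' z) * psi z i)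
                        (fun z => coeff u z * psi z i - coeff u' z * psi z i)) by (intros; ring).
    rewrite rsum_minus. ring. }
  rewrite Hdiff. eapply Rle_trans; [apply inner_mu_bound|].
  assert (Hsum : rsum m (fun z => Rabs (coeff u z - coeff u' z) * rsum d (fun i => Rabs (psi z i)))
                 <= 2 * e' * C).
  { unfold C. rewrite <- rsum_scal. apply rsum_le. intros z Hz. rewrite <- Rmult_assoc.
    apply Rmult_le_compat_r; [apply rsum_nonneg; intros; apply Rabs_pos | apply Hcoeff]. }
  assert (h := vnorm_nonneg d x). nra.
Qed.

(* First-order expansion: |D(u', u)| <= D(u', u) + D(u, u') = <u' - u, grad u' - grad u>. *)
Lemma potential_differentiable : differentiable_on d (marg m phi) potential grad.
Proof.
  intros u Hu e He.
  destruct (grad_continuous u Hu e He) as [delta [Hdelta Hgrad]].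
  exists delta. split; auto. intros u' Hu' Hn.
  assert (Hsum : bregman d potential grad u' u + bregman d potential grad u u'
                 = inner d (vsub u' u) (vsub (grad u') (grad u))).
  { unfold bregman. rewrite !inner_sub_r, !inner_sub_l. ring. }
  assert (B1 := bregman_nonneg u u' Hu Hu'). assert (B2 := bregman_nonneg u' u Hu' Hu).
  assert (Hb := Hgrad u' Hu' Hn (vsub u' u)). assert (h := Rle_abs (inner d (vsub u' u) (vsub (grad u') (grad u)))).
  change (potential u' - potential u - inner d (vsub u' u) (grad u)) with (bregman d potential grad u' u).
  rewrite Rabs_right by lra. lra.
Qed.

Lemma excess_risk_bregman u q : marg m phi u -> is_prob m q ->
  delta_s_eq m k S (t u) q (bregman d potential grad (mu m phi q) u).
Proof.
  intros Hu Hq. unfold delta_s_eq. rewrite excess_loss_bregman by auto. split.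
  - intros r [v [Hv ->]]. apply t_minimizes; auto.
  - intros b Hb. apply Hb. exists (t (mu m phi q)). split; auto.
    apply t_space. exists q; split; auto.
Qed.

End SurrogateLoss.

Theorem theorem3p1 (m d k : nat) (phi : nat -> vec) (S : vec -> nat -> R) (t : vec -> vec) :
  (0 < m)%nat ->
  (forall y, (y < m)%nat -> in_space d (phi y)) ->
  (forall y, (y < m)%nat -> continuous_on_R k (in_space k) (fun v => S v y)) ->
  (forall u, marg m phi u -> in_space k (t u)) ->
  continuous_on d k (marg m phi) t ->
  (forall u u', marg m phi u -> marg m phi u' -> t u = t u' -> u = u') ->
  (forall q, is_prob m q -> forall v, in_space k v -> v <> t (mu m phi q) ->
     sexp m S (t (mu m phi q)) q < sexp m S v q) ->
  exists (h : vec -> R) (grad : vec -> vec),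
    strictly_convex_on d (marg m phi) h /\
    (forall u, marg m phi u -> aff_dir m phi (grad u)) /\
    differentiable_on d (marg m phi) h grad /\
    (forall u q, marg m phi u -> is_prob m q ->
       delta_s_eq m k S (t u) q (bregman d h grad (mu m phi q) u)).
Proof.
  intros m_pos phi_space S_cont t_space t_cont t_inj t_argmin.
  exists (potential m d phi S t), (grad m d phi S t).
  split; [|split; [|split]].
  - eapply potential_strictly_convex; eassumption.
  - intros u _. apply grad_aff_dir.
  - eapply potential_differentiable; eassumption.
  - intros u q Hu Hq. eapply excess_risk_bregman; eassumption.
Qed.
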